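(* Let $d\ge1$, $N\ge1$, $T>0$, let $\mathcal{K}:\mathbb{R}^d\to\mathbb{R}^d$ be Lipschitz continuous and compactly supported in $B_R(0)$, and for $\alpha,\beta\in\mathbb{R}$ let $K^N_{\alpha,\beta}(z)=N^{-\alpha}\mathcal{K}(z/N^\beta)$. Assume the desired velocity vanishes, $v_\textup{d}\equiv0$. Let $\alpha,\beta,\alpha',\beta'\in\mathbb{R}$ with $\alpha+\beta=\alpha'+\beta'$, let $U^N(z)=N^{\beta'-\beta}z$, and let $\mu^N_\cdot,\nu^N_\cdot\in C([0,T];\mathcal{M}^N_1(\mathbb{R}^d))$ be the solutions of the Cauchy problem with interaction kernels $K^N_{\alpha,\beta}$ and $K^N_{\alpha',\beta'}$ respectively, and initial data $\bar\mu^N$ and $\bar\nu^N=U^N\#\bar\mu^N$ in $\mathcal{M}^N_1(\mathbb{R}^d)$. Then $\nu^N_t=U^N\#\mu^N_t$ for all $t\in(0,T]$.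
   Context: $\mathcal{M}^N_1(\mathbb{R}^d)$ is the set of positive Borel measures on $\mathbb{R}^d$ with total mass $N$ and finite first moment; $\#$ denotes push-forward. With interaction kernel $K$ and $v_\textup{d}\equiv0$, the velocity is $v[\mu](x)=-\int K(y-x)\,d\mu(y)$. A solution of the Cauchy problem $\partial_t\mu_t+\nabla\cdot(\mu_tv[\mu_t])=0$, $\mu_0=\bar\mu$, on $[0,T]$ is a curve $\mu_\cdot\in C([0,T];\mathcal{M}^N_1(\mathbb{R}^d))$ given by $\mu_t=\gamma_t\#\bar\mu$, where the flow map satisfies $\gamma_t(x)=x+\int_0^tv[\mu_s](\gamma_s(x))\,ds$. *)

From HB Require Import structures.
From mathcomp Require Import all_boot all_order all_algebra.
From mathcomp Require Import all_classical all_reals all_analysis.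
Set Implicit Arguments. Unset Strict Implicit. Unset Printing Implicit Defensive.
Import Order.TTheory GRing.Theory Num.Theory numFieldNormedType.Exports.
Local Open Scope classical_set_scope.
Local Open Scope ring_scope.

Section defs.
Variables (R : realType) (d : nat).

Definition vec := 'rV[R]_d.
Definition Rd := g_sigma_algebraType (@open vec).
Definition meas := {measure set Rd -> \bar R}.

Definition enorm (x : vec) : R := Num.sqrt (\sum_(i < d) x ord0 i ^+ 2).

Definition inMN (N : nat) (mu : meas) : Prop :=
  mu setT = (N%:R)%:E /\ (\int[mu]_(x in [set: Rd]) (enorm x)%:E < +oo)%E.

Definition lipschitzE (f : vec -> vec) : Prop :=
  exists L : R, forall x y, enorm (f x - f y) <= L * enorm (x - y).

Definition compact_support_in_ball (f : vec -> vec) (Rr : R) : Prop :=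
  compact (closure [set x | f x != 0]) /\
  closure [set x | f x != 0] `<=` [set x | enorm x < Rr].

Definition Kscaled (K : vec -> vec) (N : nat) (a b : R) (z : vec) : vec :=
  (N%:R `^ (- a)) *: K ((N%:R `^ (- b)) *: z).

(* velocity field with v_d = 0: v[mu](x) = - \int K(y - x) dmu(y), componentwise *)
Definition velocity (K : vec -> vec) (mu : meas) (x : vec) : vec :=
  \row_(i < d) (- fine (\int[mu]_(y in [set: Rd]) ((K ((y : vec) - x)) ord0 i)%:E)).

(* Wasserstein-1 distance, Kantorovich-Rubinstein dual form *)
Definition lip1 (f : vec -> R) : Prop := forall x y, `|f x - f y| <= enorm (x - y).
Definition W1 (mu nu : meas) : \bar R :=
  ereal_sup [set (\int[mu]_(x in [set: Rd]) (f x)%:E -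
                  \int[nu]_(x in [set: Rd]) (f x)%:E)%E | f in lip1].

Definition curve_in_CMN (N : nat) (T : R) (mu : R -> meas) : Prop :=
  (forall t, 0 <= t <= T -> inMN N (mu t)) /\
  (forall t, 0 <= t <= T -> forall eps : R, 0 < eps ->
     exists2 del : R, 0 < del & forall s, 0 <= s <= T -> `|s - t| < del ->
       (W1 (mu s) (mu t) < eps%:E)%E).

Definition is_pushforward (nu mu : meas) (f : vec -> vec) : Prop :=
  forall A : set Rd, measurable A -> nu A = mu (f @^-1` A).

Definition is_flow (K : vec -> vec) (T : R) (mu : R -> meas) (gam : R -> Rd -> Rd) : Prop :=
  forall t, 0 <= t <= T ->
    measurable_fun [set: Rd] (gam t) /\
    forall (x : vec) (i : 'I_d),
      (@lebesgue_measure R).-integrable `[0, t]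
         (fun s => ((velocity K (mu s) (gam s x)) ord0 i)%:E) /\
      (gam t x : vec) ord0 i = x ord0 i +
        fine (\int[@lebesgue_measure R]_(s in `[0, t])
                 ((velocity K (mu s) (gam s x)) ord0 i)%:E).

Definition is_solution (K : vec -> vec) (N : nat) (T : R) (mubar : meas) (mu : R -> meas) : Prop :=
  curve_in_CMN N T mu /\
  exists gam : R -> Rd -> Rd, is_flow K T mu gam /\
    forall t, 0 <= t <= T -> is_pushforward (mu t) mubar (gam t).

End defs.

(* Let lam = N^(b' - b) and let gam, eta be the flow maps of mu and nu. Since
   a + b = a' + b', the kernels are conjugate: lam K_{a,b}(w) = K_{a',b'}(lam w).
   Pulling both velocity fields back to mubar (through gam_t, and through eta_t
   composed with the scaling, using nubar = lam # mubar), the gap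
   D_t(x) = eta_t(lam x) - lam gam_t(x) satisfies |D_t| <= C int_0^t sup |D_r| dr,
   where C is the mass times the Lipschitz constant of K_{a',b'}; D is also
   bounded because the kernel is. On time steps of length h with C h <= 1/2 this
   halves any bound on sup |D|, so D vanishes step by step. Hence
   eta_t o lam = lam o gam_t and nu_t = (eta_t o lam) # mubar = lam # mu_t. *)

From HB Require Import structures.
From mathcomp Require Import all_boot all_order all_algebra.
From mathcomp Require Import all_classical all_reals all_analysis.
From mathcomp Require Import measurable_realfun ring lra.
Import Order.TTheory GRing.Theory Num.Theory numFieldNormedType.Exports.
Set Implicit Arguments. Unset Strict Implicit. Unset Printing Implicit Defensive.
Local Open Scope classical_set_scope.
Local Open Scope ring_scope.

Lemma sqr_sum_ge_sum_sqr (R : realDomainType) (I : finType) (F : I -> R) :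
  (forall i, 0 <= F i) -> \sum_i F i ^+ 2 <= (\sum_i F i) ^+ 2.
Proof.
move=> F0; rewrite expr2 big_distrl /= ler_sum // => i _.
by rewrite expr2 ler_wpM2l // (bigD1 i) //= lerDl sumr_ge0.
Qed.

Lemma le_geometric_eq0 (R : archiRealFieldType) (z B : R) :
  0 <= B -> (forall k, `|z| <= B / 2 ^+ k) -> z = 0.
Proof.
move=> B0 zB; apply/eqP; rewrite -normr_le0 leNgt; apply/negP => z_gt0.
set k := Num.bound (B / `|z|).
have Bk : B / `|z| < k%:R by apply: archi_boundP; rewrite divr_ge0 // ltW.
have k_le : (k%:R : R) <= 2 ^+ k by rewrite -natrX ler_nat ltnW // ltn_expl.
have := lt_le_trans Bk k_le; rewrite ltr_pdivrMr //.
by have := zB k; rewrite ler_pdivlMr ?exprn_gt0 // mulrC; lra.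
Qed.

Lemma lipschitz_continuous (R : realType) (U V : normedModType R) (f : U -> V)
    (C : R) :
  (forall x y, `|f x - f y| <= C * `|x - y|) -> continuous f.
Proof.
move=> fC x; apply/(@cvgrPdist_lt _ _ _ _ (nbhs_filter x)) => e e0.
have C1 : 0 < `|C| + 1 by rewrite ltr_wpDl.
have := @cvgr_dist_lt _ _ _ (nbhs x) (nbhs_filter x) id x (@cvg_id _ (nbhs x))
  (e / (`|C| + 1)) (divr_gt0 e0 C1).
apply: filterS => y xy; apply: le_lt_trans (fC x y) _.
apply: (@le_lt_trans _ _ ((`|C| + 1) * `|x - y|)).
  by rewrite ler_wpM2r // (le_trans (ler_norm C)) // lerDl.
by rewrite mulrC -ltr_pdivlMr.
Qed.

Section EuclideanNorm.
Variables (R : realType) (d : nat).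
Implicit Types x y : vec R d.

Lemma enorm_ge0 x : 0 <= enorm x.
Proof. exact: sqrtr_ge0. Qed.

Lemma coord_le_enorm x i : `|x ord0 i| <= enorm x.
Proof.
rewrite /enorm -(sqrtr_sqr (x ord0 i)) ler_sqrt ?sumr_ge0 // => [|j _]; last exact: sqr_ge0.
by rewrite (bigD1 i) //= lerDl sumr_ge0 // => j _; exact: sqr_ge0.
Qed.

Lemma coord_le_mx_norm x i : `|x ord0 i| <= `|x|.
Proof.
rewrite [X in _ <= X]mx_normrE.
exact: (le_bigmax 0 (fun ij : 'I_1 * 'I_d => `|x ij.1 ij.2|) (ord0, i)).
Qed.

Lemma mx_norm_le x (E : R) : 0 <= E -> (forall j, `|x ord0 j| <= E) -> `|x| <= E.
Proof.
move=> E0 xE; change (mx_norm x <= E); rewrite mx_normrE.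
by apply: bigmax_le => //= -[k j] _ /=; rewrite (ord1 k); exact: xE.
Qed.

Lemma enorm_le_sum_coord x : enorm x <= \sum_j `|x ord0 j|.
Proof.
rewrite /enorm -(ger0_norm (sumr_ge0 _ (fun j _ => normr_ge0 (x ord0 j)))).
rewrite -sqrtr_sqr ler_sqrt ?sqr_ge0 //.
rewrite (eq_bigr (fun j => `|x ord0 j| ^+ 2)); first exact: sqr_sum_ge_sum_sqr.
by move=> j _; rewrite real_normK ?num_real.
Qed.

Lemma enorm_le_mx_norm x : enorm x <= d%:R * `|x|.
Proof.
apply: le_trans (enorm_le_sum_coord x) _.
rewrite mulr_natl -[in X in _ *+ X](card_ord d) -sumr_const.
by apply: ler_sum => j _; exact: coord_le_mx_norm.
Qed.

Lemma mx_norm_le_enorm x : `|x| <= enorm x.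
Proof. by apply: mx_norm_le (enorm_ge0 x) _ => j; exact: coord_le_enorm. Qed.

Lemma lipschitzE_mx_norm (f : vec R d -> vec R d) (L : R) :
  (forall x y, enorm (f x - f y) <= L * enorm (x - y)) ->
  forall x y, `|f x - f y| <= `|L| * d%:R * `|x - y|.
Proof.
move=> fL x y; apply: le_trans (mx_norm_le_enorm _) _.
apply: le_trans (fL x y) _; rewrite -mulrA.
apply: le_trans (ler_wpM2r (enorm_ge0 _) (ler_norm L)) _.
by rewrite ler_wpM2l // enorm_le_mx_norm.
Qed.

End EuclideanNorm.

Section BoundedIntegral.
Context (R : realType) (dT : measure_display) (X : measurableType dT).
Variables (m : {measure set X -> \bar R}) (c : R) (h : X -> R) (M : R).
Hypotheses (mT : m setT = c%:E) (mh : measurable_fun setT h).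
Hypothesis hM : forall y, `|h y| <= M.

Let int_abs_le : (\int[m]_(y in setT) `|(h y)%:E| <= (c * M)%:E)%E.
Proof.
apply: (@le_trans _ _ (\int[m]_(y in setT) (cst M%:E) y)%E).
  apply: ge0_le_integral => //; first exact/measurableT_comp/measurable_EFinP.
  by move=> y _; rewrite lee_fin.
by rewrite integral_cst // mT -EFinM mulrC.
Qed.

Lemma bounded_integrable : m.-integrable setT (EFin \o h).
Proof.
apply/integrableP; split; first exact/measurable_EFinP.
by apply: le_lt_trans int_abs_le _; rewrite ltry.
Qed.

Lemma abs_Rintegral_le : `|\int[m]_(y in setT) h y| <= c * M.
Proof.
have fin := integrable_fin_num measurableT bounded_integrable.
have mEh : measurable_fun setT (EFin \o h) by exact/measurable_EFinP.
have := le_trans (le_abse_integral m measurableT mEh) int_abs_le.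
by rewrite /Rintegral -(fineK fin) /= lee_fin.
Qed.

End BoundedIntegral.

Lemma abs_Rintegral_itv_le (R : realType) (h : R -> R) (s t0 W : R) :
  t0 <= s -> 0 <= W ->
  (@lebesgue_measure R).-integrable `[0, s] (fun r => (h r)%:E) ->
  (forall r, 0 <= r <= s -> `|h r| <= W * (t0 < r)%R%:R) ->
  `|\int[@lebesgue_measure R]_(r in `[0, s]) h r| <= W * (s - t0).
Proof.
move=> ts W0 hint hW.
have [mh _] := integrableP _ _ _ hint.
have mI : measurable (`[0, s] : set (measurableTypeR R)) by exact: measurable_itv.
have mA : measurable (`]t0, +oo[%classic : set (measurableTypeR R)).
  exact: measurable_itv.
have indE (r : R) : (t0 < r)%R%:R = \1_(`]t0, +oo[%classic) r :> R.
  by rewrite indicE mem_setE in_itv /= andbT.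
have int_le : (\int[@lebesgue_measure R]_(r in `[0%R, s]) `|(h r)%:E|
               <= (W * (s - t0))%:E)%E.
  apply: (@le_trans _ _ (\int[@lebesgue_measure R]_(r in `[0%R, s])
                          (W * \1_(`]t0, +oo[%classic) r)%:E)%E).
    apply: ge0_le_integral => //; first exact: measurableT_comp.
      by apply/measurable_EFinP; apply: measurable_funM.
    move=> r; rewrite /= in_itv /= => /andP[r0 rs].
    by rewrite lee_fin -indE hW // r0 rs.
  rewrite (integralZl_indic mI (fun _ => `]t0, +oo[%classic)) //; last first.
    by move=> W_lt0; move: (lt_le_trans W_lt0 W0); rewrite ltxx.
  rewrite integral_indic // EFinM; apply: lee_pmul => //.
  apply: (@le_trans _ _ (@lebesgue_measure R `]t0, s]%classic)).
    apply: le_measure; rewrite ?inE; [exact: measurableI|exact: measurable_itv|].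
    by move=> r [] /=; rewrite !in_itv /= andbT => -> /andP[_ ->].
  rewrite lebesgue_measure_itv /=; case: ifPn => _; first by rewrite -EFinB.
  by rewrite lee_fin subr_ge0.
have := le_trans (le_abse_integral _ mI mh) int_le.
by rewrite /Rintegral -(fineK (integrable_fin_num mI hint)) /= lee_fin.
Qed.

Section ContractionVanishing.
Variables (R : realType) (X : Type) (D : R -> X -> R) (T B C : R).
Hypothesis C_ge0 : 0 <= C.
Hypothesis D_bounded : forall s x, 0 <= s <= T -> `|D s x| <= B.
Hypothesis D_contraction : forall t0 s E, 0 <= E -> t0 <= s -> 0 <= s <= T ->
  (forall r y, 0 <= r <= s -> `|D r y| <= E * (t0 < r)%R%:R) ->
  forall x, `|D s x| <= C * E * (s - t0).

Let h := (2 * (C + 1))^-1.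

Let h_gt0 : 0 < h.
Proof. by have C0 := C_ge0; rewrite /h invr_gt0; lra. Qed.

Let Ch_le : C * h <= 2^-1.
Proof.
have C0 := C_ge0; rewrite /h ler_pdivrMr; last lra.
by rewrite mulrA mulVf ?mul1r; lra.
Qed.

Lemma contraction_vanishing_step t0 :
  (forall r y, 0 <= r <= T -> r <= t0 -> D r y = 0) ->
  forall s x, 0 <= s <= T -> s <= t0 + h -> D s x = 0.
Proof.
move=> D0 s x sT st0; have B0 : 0 <= B := le_trans (normr_ge0 _) (D_bounded x sT).
apply: (le_geometric_eq0 B0) => k; elim: k s x sT st0 => [|k IHk] s x sT st0.
  by rewrite expr0 divr1; exact: D_bounded.
have [sts|t0s] := leP s t0; first by rewrite D0 // normr0 divr_ge0 ?exprn_ge0.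
set E := B / 2 ^+ k; have E0 : 0 <= E by rewrite divr_ge0 ?exprn_ge0.
have /= E_half : E / 2 = B / 2 ^+ k.+1 by rewrite exprS invfM mulrCA mulrC.
rewrite -E_half; apply: le_trans (D_contraction E0 (ltW t0s) sT _ x) _.
  move=> r y /andP[r0 rs]; have rT : 0 <= r <= T by case/andP: sT; rewrite r0; lra.
  have [t0r|rt0] := ltP t0 r; first by rewrite mulr1 IHk //; lra.
  by rewrite D0 // normr0 mulr0.
apply: (@le_trans _ _ (C * h * E)).
  by rewrite [C * E * _]mulrAC ler_wpM2r // ler_wpM2l //; lra.
by rewrite mulrC ler_wpM2l // Ch_le.
Qed.

Lemma contraction_vanishing s x : 0 <= s <= T -> D s x = 0.
Proof.
move=> sT; suff D0 n : forall r y, 0 <= r <= T -> r <= n%:R * h - 1 -> D r y = 0.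
  apply: (D0 (Num.bound ((s + 1) / h))) => //.
  rewrite lerBrDr -ler_pdivrMr //; apply/ltW/archi_boundP.
  by case/andP: sT => s0 _; rewrite divr_ge0 ?ltW //; lra.
elim: n => [|n IHn] r y rT; first by case/andP: rT; lra.
by rewrite -natr1 mulrDl mul1r addrAC => /(contraction_vanishing_step IHn)->.
Qed.

End ContractionVanishing.

Section BorelRd.
Variables (R : realType) (d : nat).

Lemma open_measurable_Rd (A : set (vec R d)) : open A -> measurable (A : set (Rd R d)).
Proof. by move=> oA; apply: sub_sigma_algebra. Qed.

Lemma continuous_measurable_Rd_R (f : vec R d -> R) : continuous f ->
  measurable_fun [set: Rd R d] (f : Rd R d -> R).
Proof.
move=> /continuousP cf; apply: (measurability _ (RGenOpens.measurableE R)).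
move=> _ [_ [a [b ->] <-]]; rewrite setTI.
apply: open_measurable_Rd; exact/cf/interval_open.
Qed.

Lemma continuous_measurable_Rd (f : vec R d -> vec R d) : continuous f ->
  measurable_fun [set: Rd R d] (f : Rd R d -> Rd R d).
Proof.
move=> /continuousP cf.
apply: (@measurability _ _ (Rd R d) (Rd R d) setT f (@open (vec R d))) => //.
by move=> _ [B oB <-]; rewrite setTI; apply: open_measurable_Rd; exact: cf.
Qed.

Lemma integral_is_pushforward (c : R) (m0 m1 : meas R d) (G : Rd R d -> Rd R d)
    (F : Rd R d -> R) (M : R) :
  measurable_fun setT G -> is_pushforward m1 m0 G -> m0 setT = c%:E ->
  measurable_fun setT F -> (forall y, `|F y| <= M) ->
  (\int[m1]_(y in setT) (F y)%:E = \int[m0]_(y in setT) (F (G y))%:E)%E.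
Proof.
move=> mG m10 m0T mF FM.
have mFG : measurable_fun [set: Rd R d] (F \o G) by exact: measurableT_comp.
have intFG : m0.-integrable (G @^-1` setT) ((EFin \o F) \o G).
  by rewrite preimage_setT; exact: (bounded_integrable m0T mFG (fun y => FM (G y))).
have mEF : measurable_fun [set: Rd R d] (EFin \o F) by exact/measurable_EFinP.
have := integral_pushforward mG mEF intFG measurableT.
rewrite preimage_setT => <-.
by apply: eq_measure_integral => A mA _; exact: m10.
Qed.

End BorelRd.

Lemma is_pushforward_comp (R : realType) (d : nat) (m0 m1 m2 : meas R d)
    (G H : Rd R d -> Rd R d) :
  measurable_fun setT H -> is_pushforward m1 m0 G -> is_pushforward m2 m1 H ->
  is_pushforward m2 m0 (H \o G).
Proof.
move=> mH m10 m21 A mA; rewrite m21 // m10 //.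
by have := mH measurableT A mA; rewrite setTI.
Qed.

Lemma scale_measurable (R : realType) (d : nat) (lam : R) :
  measurable_fun [set: Rd R d] (fun z : Rd R d => (lam *: (z : vec R d) : Rd R d)).
Proof.
apply: continuous_measurable_Rd; apply: (@lipschitz_continuous _ _ _ _ `|lam|) => x y.
by rewrite -scalerBr normrZ.
Qed.

Section KernelIntegrals.
Variables (R : realType) (d : nat) (K : vec R d -> vec R d) (M C : R).
Hypothesis K_bounded : forall w, `|K w| <= M.
Hypothesis K_lip : forall p q, `|K p - K q| <= C * `|p - q|.

Lemma kernel_coord_bounded w i : `|K w ord0 i| <= M.
Proof. exact: le_trans (coord_le_mx_norm _ _) (K_bounded w). Qed.

Lemma kernel_coord_continuous (q : vec R d) i :
  continuous (fun w : vec R d => K (w - q) ord0 i).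
Proof.
apply: (@lipschitz_continuous _ _ _ _ C) => x y.
have -> : K (x - q) ord0 i - K (y - q) ord0 i = (K (x - q) - K (y - q)) ord0 i.
  by rewrite !mxE.
apply: le_trans (coord_le_mx_norm _ _) _.
by rewrite (le_trans (K_lip _ _)) // opprB addrA subrK.
Qed.

Lemma kernel_coord_measurable (G : Rd R d -> Rd R d) (q : vec R d) i :
  measurable_fun setT G ->
  measurable_fun [set: Rd R d] (fun y => K ((G y : vec R d) - q) ord0 i).
Proof.
move=> mG; have mKq := continuous_measurable_Rd_R (@kernel_coord_continuous q i).
exact: measurableT_comp mKq mG.
Qed.

Lemma velocity_is_pushforward (c : R) (m0 m : meas R d) (G : Rd R d -> Rd R d)
    (p : vec R d) i :
  measurable_fun setT G -> is_pushforward m m0 G -> m0 setT = c%:E ->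
  velocity K m p ord0 i = - \int[m0]_(y in setT) K ((G y : vec R d) - p) ord0 i.
Proof.
move=> mG mG0 m0T; rewrite mxE; congr (- fine _).
have mid := @measurable_id _ (Rd R d) setT.
exact: integral_is_pushforward mG mG0 m0T (kernel_coord_measurable p i mid)
  (fun y => kernel_coord_bounded _ i).
Qed.

End KernelIntegrals.

Section ScaledKernel.
Variables (R : realType) (d N : nat) (Kc : vec R d -> vec R d).
Hypothesis N_gt0 : (0 < N)%N.

Let powN_gt0 (x : R) : 0 < N%:R `^ x.
Proof. by rewrite powR_gt0 // ltr0n. Qed.

Lemma Kscaled_bounded (Km a b : R) : (forall w, `|Kc w| <= Km) ->
  forall w, `|Kscaled Kc N a b w| <= N%:R `^ (- a) * Km.
Proof.
by move=> KcKm w; rewrite /Kscaled normrZ gtr0_norm // ler_wpM2l ?KcKm ?(ltW (powN_gt0 _)).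
Qed.

Lemma Kscaled_lipschitz (L a b : R) :
  (forall x y, enorm (Kc x - Kc y) <= L * enorm (x - y)) ->
  forall p q, `|Kscaled Kc N a b p - Kscaled Kc N a b q|
    <= N%:R `^ (- a) * (`|L| * d%:R * N%:R `^ (- b)) * `|p - q|.
Proof.
move=> KcL p q; rewrite /Kscaled -scalerBr normrZ gtr0_norm ?powN_gt0 //.
rewrite -mulrA ler_wpM2l ?(ltW (powN_gt0 _)) //.
apply: le_trans (lipschitzE_mx_norm KcL _ _) _.
by rewrite -scalerBr normrZ gtr0_norm ?powN_gt0 // mulrA.
Qed.

Lemma scale_Kscaled (a b a' b' : R) : a + b = a' + b' ->
  forall w, N%:R `^ (b' - b) *: Kscaled Kc N a b w
            = Kscaled Kc N a' b' (N%:R `^ (b' - b) *: w).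
Proof.
move=> ab w; rewrite /Kscaled !scalerA.
have N_neq0 : (N%:R : R) != 0 by rewrite pnatr_eq0 -lt0n.
by rewrite -!powRD ?N_neq0 ?implybT //; congr (_ `^ _ *: Kc (_ `^ _ *: w)); lra.
Qed.

End ScaledKernel.

Lemma lipschitzE_support_bounded (R : realType) (d : nat) (Kc : vec R d -> vec R d)
    (Rr : R) :
  (1 <= d)%N -> lipschitzE Kc -> compact_support_in_ball Kc Rr ->
  exists Km, forall w, `|Kc w| <= Km.
Proof.
move=> d_gt0 [L KcL] [_ supp_ball].
have in_ball w : Kc w != 0 -> enorm w < Rr.
  by move=> Kw0; apply: supp_ball; apply: subset_closure.
pose y0 : vec R d := const_mx `|Rr|.
have Ky0 : Kc y0 = 0.
  apply/eqP; apply: contraT => /in_ball; rewrite ltNge => /negbTE <-.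
  apply: le_trans (ler_norm Rr) _.
  by have := coord_le_enorm y0 (Ordinal d_gt0); rewrite mxE normr_id.
exists (`|L| * d%:R * (`|Rr| + `|Rr|)) => w.
have [->|Kw0] := eqVneq (Kc w) 0; first by rewrite normr0 !mulr_ge0.
rewrite -[Kc w]subr0 -Ky0; apply: le_trans (lipschitzE_mx_norm KcL _ _) _.
rewrite ler_wpM2l ?mulr_ge0 //; apply: le_trans (ler_normB _ _) _; apply: lerD.
  apply: le_trans (mx_norm_le_enorm w) _.
  exact/ltW/(lt_le_trans (in_ball w Kw0))/ler_norm.
by apply: mx_norm_le => // j; rewrite mxE normr_id.
Qed.

Section ScaledFlows.
Variables (R : realType) (d : nat) (T c lam Kb CK : R).
Variables (K1 K2 : vec R d -> vec R d) (mubar nubar : meas R d).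
Variables (mu nu : R -> meas R d) (gam eta : R -> Rd R d -> Rd R d).
Hypothesis lam_gt0 : 0 < lam.
Hypothesis CK_ge0 : 0 <= CK.
Hypothesis K2_bounded : forall w, `|K2 w| <= Kb.
Hypothesis K2_lip : forall p q, `|K2 p - K2 q| <= CK * `|p - q|.
Hypothesis K12 : forall w, lam *: K1 w = K2 (lam *: w).
Hypothesis mubarT : mubar setT = c%:E.
Hypothesis nubar_push : is_pushforward nubar mubar (fun z => lam *: z).
Hypothesis gam_flow : is_flow K1 T mu gam.
Hypothesis mu_push : forall t, 0 <= t <= T -> is_pushforward (mu t) mubar (gam t).
Hypothesis eta_flow : is_flow K2 T nu eta.
Hypothesis nu_push : forall t, 0 <= t <= T -> is_pushforward (nu t) nubar (eta t).

Let K1E w : K1 w = lam^-1 *: K2 (lam *: w).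
Proof. by rewrite -K12 scalerA mulVf ?scale1r // gt_eqF. Qed.

Let K1_bounded w : `|K1 w| <= lam^-1 * Kb.
Proof.
by rewrite K1E normrZ gtr0_norm ?invr_gt0 // ler_wpM2l ?K2_bounded // invr_ge0 ltW.
Qed.

Let K1_lip p q : `|K1 p - K1 q| <= CK * `|p - q|.
Proof.
rewrite !K1E -scalerBr normrZ gtr0_norm ?invr_gt0 //.
have lam_inv_ge0 : 0 <= lam^-1 by rewrite invr_ge0 ltW.
apply: le_trans (ler_wpM2l lam_inv_ge0 (K2_lip _ _)) _.
by rewrite -scalerBr normrZ gtr0_norm // mulrCA mulKf ?gt_eqF.
Qed.

Let c_ge0 : 0 <= c.
Proof. by rewrite -lee_fin -mubarT; exact: measure_ge0. Qed.

Let Kb_ge0 : 0 <= Kb.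
Proof. exact: le_trans (normr_ge0 _) (K2_bounded 0). Qed.

Let K2_integrable (G : Rd R d -> Rd R d) (q : vec R d) i : measurable_fun setT G ->
  mubar.-integrable setT (EFin \o (fun y => K2 ((G y : vec R d) - q) ord0 i)).
Proof.
move=> mG; exact: bounded_integrable mubarT
  (kernel_coord_measurable K2_lip q i mG)
  (fun y => kernel_coord_bounded K2_bounded _ i).
Qed.

Lemma velocity_nu_pullback r p i : 0 <= r <= T ->
  velocity K2 (nu r) p ord0 i
  = - \int[mubar]_(y in setT) K2 ((eta r (lam *: (y : vec R d)) : vec R d) - p) ord0 i.
Proof.
move=> rT; have mG := measurableT_comp (eta_flow rT).1 (scale_measurable lam).
by rewrite (velocity_is_pushforward K2_bounded K2_lip p i mG
  (is_pushforward_comp (eta_flow rT).1 nubar_push (nu_push rT)) mubarT).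
Qed.

Lemma scaled_velocity_mu_pullback r q i : 0 <= r <= T ->
  lam * velocity K1 (mu r) q ord0 i
  = - \int[mubar]_(y in setT) K2 (lam *: (gam r y : vec R d) - lam *: q) ord0 i.
Proof.
move=> rT; have mG := (gam_flow rT).1.
rewrite (velocity_is_pushforward K1_bounded K1_lip q i mG (mu_push rT) mubarT).
have mK1 := kernel_coord_measurable K1_lip q i mG.
rewrite mulrN -RintegralZl //; last exact: bounded_integrable mubarT mK1
  (fun y => kernel_coord_bounded K1_bounded _ i).
by congr (- _); apply: eq_Rintegral => y _; rewrite -scalerBr -K12 mxE.
Qed.

Definition flow_gap s (x : vec R d) : vec R d :=
  (eta s (lam *: x) : vec R d) - lam *: (gam s x : vec R d).

Definition velocity_gap r (x : vec R d) i :=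
  velocity K2 (nu r) (eta r (lam *: x)) ord0 i - lam * velocity K1 (mu r) (gam r x) ord0 i.

Definition kernel_gap r (x y : vec R d) i :=
  K2 ((eta r (lam *: y) : vec R d) - eta r (lam *: x)) ord0 i
  - K2 (lam *: (gam r y : vec R d) - lam *: (gam r x : vec R d)) ord0 i.

Lemma velocity_gapE r x i : 0 <= r <= T ->
  velocity_gap r x i = - \int[mubar]_(y in setT) kernel_gap r x y i.
Proof.
move=> rT; have [meta _] := eta_flow rT; have [mgam _] := gam_flow rT.
rewrite /velocity_gap velocity_nu_pullback // scaled_velocity_mu_pullback //.
rewrite /kernel_gap RintegralB //; first by rewrite opprK opprB addrC.
  exact: K2_integrable (measurableT_comp meta (scale_measurable lam)).
exact: K2_integrable (measurableT_comp (scale_measurable lam) mgam).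
Qed.

Lemma flow_gap_integral s x i : 0 <= s <= T ->
  (@lebesgue_measure R).-integrable `[0, s] (fun r => (velocity_gap r x i)%:E) /\
  flow_gap s x ord0 i = \int[@lebesgue_measure R]_(r in `[0, s]) velocity_gap r x i.
Proof.
move=> sT; have mI : measurable (`[0, s] : set (measurableTypeR R)).
  exact: measurable_itv.
have [int_eta eta_si] := (eta_flow sT).2 (lam *: x) i.
have [int_gam gam_si] := (gam_flow sT).2 x i.
have int_lam_gam : (@lebesgue_measure R).-integrable `[0, s]
    (EFin \o (fun r => lam * velocity K1 (mu r) (gam r x) ord0 i)).
  by apply: eq_integrable mI _ _ _ (integrableZl mI lam int_gam) => r _; rewrite /= EFinM.
split.
  apply: eq_integrable mI _ _ _ (integrableB mI int_eta int_lam_gam).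
  by move=> r _; rewrite /= EFinB.
rewrite (RintegralB mI int_eta int_lam_gam) (RintegralZl lam mI int_gam).
by rewrite /flow_gap !mxE eta_si gam_si mxE mulrDr opprD addrACA subrr add0r.
Qed.

Lemma abs_kernel_gap_le r x y i : `|kernel_gap r x y i| <= 2 * Kb.
Proof.
rewrite /kernel_gap mulr2n mulrDl mul1r; apply: le_trans (ler_normB _ _) _.
by apply: lerD; exact: kernel_coord_bounded K2_bounded _ i.
Qed.

Lemma abs_kernel_gap_le_flow_gap r x y i E : 0 <= E ->
  (forall z j, `|flow_gap r z ord0 j| <= E) -> `|kernel_gap r x y i| <= CK * (2 * E).
Proof.
move=> E0 gapE.
have coordB (p q : vec R d) : K2 p ord0 i - K2 q ord0 i = (K2 p - K2 q) ord0 i.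
  by rewrite !mxE.
rewrite /kernel_gap coordB; apply: le_trans (coord_le_mx_norm _ _) _.
apply: le_trans (K2_lip _ _) _; rewrite ler_wpM2l //.
have -> : (eta r (lam *: y) : vec R d) - eta r (lam *: x)
    - (lam *: (gam r y : vec R d) - lam *: (gam r x : vec R d))
    = flow_gap r y - flow_gap r x.
  by apply/matrixP => k l; rewrite /flow_gap !mxE; ring.
apply: le_trans (ler_normB _ _) _; rewrite mulr2n mulrDl mul1r.
by apply: lerD; exact: mx_norm_le.
Qed.

Lemma abs_velocity_gap_le r x i M : 0 <= r <= T ->
  (forall y, `|kernel_gap r x y i| <= M) -> `|velocity_gap r x i| <= c * M.
Proof.
move=> rT kM; rewrite velocity_gapE // normrN.
have [meta _] := eta_flow rT; have [mgam _] := gam_flow rT.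
have mK := measurable_funB
  (kernel_coord_measurable K2_lip (eta r (lam *: x)) i
     (measurableT_comp meta (scale_measurable lam)))
  (kernel_coord_measurable K2_lip (lam *: (gam r x : vec R d)) i
     (measurableT_comp (scale_measurable lam) mgam)).
exact: abs_Rintegral_le mubarT mK kM.
Qed.

Lemma flow_gap_bounded s x i : 0 <= s <= T ->
  `|flow_gap s x ord0 i| <= c * (2 * Kb) * (T + 1).
Proof.
move=> sT; have [int ->] := flow_gap_integral x i sT.
have W0 : 0 <= c * (2 * Kb) by rewrite !mulr_ge0.
(* With [t0 := -1] the indicator below is identically [1] on [0, s]. *)
have s_ge : -1 <= s by case/andP: sT; lra.
apply: le_trans (abs_Rintegral_itv_le s_ge W0 int _) _.
  move=> r /andP[r0 rs]; have rT : 0 <= r <= T by case/andP: sT; rewrite r0; lra.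
  have -> : (-1 < r)%R = true by apply/idP; lra.
  by rewrite mulr1; exact: abs_velocity_gap_le rT (abs_kernel_gap_le r x ^~ i).
by rewrite ler_wpM2l //; case/andP: sT; lra.
Qed.

Lemma flow_gap_contraction t0 s E : 0 <= E -> t0 <= s -> 0 <= s <= T ->
  (forall r (y : vec R d * 'I_d), 0 <= r <= s ->
     `|flow_gap r y.1 ord0 y.2| <= E * (t0 < r)%R%:R) ->
  forall x : vec R d * 'I_d, `|flow_gap s x.1 ord0 x.2| <= c * (CK * 2) * E * (s - t0).
Proof.
move=> E0 ts sT gapE [x i] /=; have [int ->] := flow_gap_integral x i sT.
have W0 : 0 <= c * (CK * 2) * E by rewrite !mulr_ge0.
apply: abs_Rintegral_itv_le ts W0 int _ => r /andP[r0 rs].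
have rT : 0 <= r <= T by case/andP: sT; rewrite r0; lra.
have Er0 : 0 <= E * (t0 < r)%R%:R by rewrite mulr_ge0.
apply: le_trans (abs_velocity_gap_le rT (fun y => abs_kernel_gap_le_flow_gap x y i Er0
  (fun z j => gapE r (z, j) _))) _; first by rewrite r0.
by rewrite !mulrA [c * CK * 2]mulrAC.
Qed.

Lemma flow_gap_eq0 s x : 0 <= s <= T -> eta s (lam *: x) = lam *: (gam s x : vec R d).
Proof.
move=> sT; apply/eqP; rewrite -subr_eq0; apply/eqP/matrixP => k j.
rewrite (ord1 k) [RHS]mxE; have C_ge0 : 0 <= c * (CK * 2) by rewrite !mulr_ge0.
exact: (contraction_vanishing (D := fun s y => flow_gap s y.1 ord0 y.2) C_ge0
  (fun s y => @flow_gap_bounded s y.1 y.2) flow_gap_contraction (x, j) sT).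
Qed.

Lemma scaled_flows_pushforward t : 0 <= t <= T ->
  is_pushforward (nu t) (mu t) (fun z => lam *: z).
Proof.
move=> tT A mA; have [meta _] := eta_flow tT.
have mA_scaled : measurable ((fun z : Rd R d => (lam *: (z : vec R d) : Rd R d)) @^-1` A).
  by have := scale_measurable lam measurableT mA; rewrite setTI.
rewrite (is_pushforward_comp meta nubar_push (nu_push tT) mA) (mu_push tT mA_scaled).
by congr (mubar _); apply: funext => y; rewrite /preimage /= flow_gap_eq0.
Qed.

End ScaledFlows.

Theorem mainTheorem7 (R : realType) (d N : nat) (T : R)
    (Kc : vec R d -> vec R d) (Rr : R) (a b a' b' : R)
    (mubar nubar : meas R d) (mu nu : R -> meas R d) :
  (1 <= d)%N -> (1 <= N)%N -> 0 < T ->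
  lipschitzE Kc -> compact_support_in_ball Kc Rr ->
  a + b = a' + b' ->
  inMN N mubar -> inMN N nubar ->
  is_pushforward nubar mubar (fun z => (N%:R `^ (b' - b)) *: z) ->
  is_solution (Kscaled Kc N a b) N T mubar mu ->
  is_solution (Kscaled Kc N a' b') N T nubar nu ->
  forall t, 0 < t <= T ->
    is_pushforward (nu t) (mu t) (fun z => (N%:R `^ (b' - b)) *: z).
Proof.
move=> d_gt0 N_gt0 _ Kc_lip Kc_supp ab [mubarT _] _ nubar_push
  [_ [gam [gam_flow mu_push]]] [_ [eta [eta_flow nu_push]]] t /andP[t_gt0 tT].
have [Km Kc_bounded] := lipschitzE_support_bounded d_gt0 Kc_lip Kc_supp.
have [L KcL] := Kc_lip.
have powN_gt0 (x : R) : 0 < N%:R `^ x by rewrite powR_gt0 // ltr0n.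
apply: (scaled_flows_pushforward (powN_gt0 _) _ (Kscaled_bounded N_gt0 a' b' Kc_bounded)
  (Kscaled_lipschitz N_gt0 a' b' KcL) (scale_Kscaled Kc N_gt0 ab) mubarT nubar_push
  gam_flow mu_push eta_flow nu_push).
  by rewrite !mulr_ge0 ?powR_ge0.
by rewrite (ltW t_gt0) tT.
Qed.
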